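(* Let $R$ be a commutative ring with $\mathbb{Q}\subseteq R$, let $\mathcal{A}$ be a commutative unital $R$-algebra, and let $\mathcal{E}$ be a finitely generated projective $\mathcal{A}$-module with a symmetric, strongly nondegenerate, full $\mathcal{A}$-bilinear form $\langle\cdot,\cdot\rangle$. Equip $\mathcal{C}^\bullet(\mathcal{E})=\bigoplus_{r\ge 0}\mathcal{C}^r(\mathcal{E})$ with the bracket $[\cdot,\cdot]$ and the product $\wedge$ described in the context. Then $(\mathcal{C}^\bullet(\mathcal{E}),[\cdot,\cdot],\wedge)$ is a graded Poisson algebra of degree $-2$. That is: (i) $\wedge$ is associative, graded commutative and of degree $0$; (ii) $[\cdot,\cdot]$ maps $\mathcal{C}^r\times\mathcal{C}^s$ to $\mathcal{C}^{r+s-2}$ and is graded skew-symmetric; (iii) $[\cdot,\cdot]$ satisfies the graded Jacobi identity $[\mathsf{C}_1,[\mathsf{C}_2,\mathsf{C}_3]]=[[\mathsf{C}_1,\mathsf{C}_2],\mathsf{C}_3]+(-1)^{rs}[\mathsf{C}_2,[\mathsf{C}_1,\mathsf{C}_3]]$; (iv) the Leibniz rule $[\mathsf{C}_1,\mathsf{C}_2\wedge\mathsf{C}_3]=[\mathsf{C}_1,\mathsf{C}_2]\wedge\mathsf{C}_3+(-1)^{rs}\mathsf{C}_2\wedge[\mathsf{C}_1,\mathsf{C}_3]$ holds. In (iii) and (iv), $\mathsf{C}_1\in\mathcal{C}^r(\mathcal{E})$, $\mathsf{C}_2\in\mathcal{C}^s(\mathcal{E})$ and $\mathsf{C}_3\in\mathcal{C}^t(\mathcal{E})$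 are arbitrary.
   Context: The form $\langle\cdot,\cdot\rangle:\mathcal{E}\times\mathcal{E}\to\mathcal{A}$ is strongly nondegenerate if the induced map $\mathcal{E}\to\operatorname{Hom}_{\mathcal{A}}(\mathcal{E},\mathcal{A})$ is an isomorphism. It is full if every $a\in\mathcal{A}$ is a finite sum $\sum_i\langle x_i,y_i\rangle$ with $x_i,y_i\in\mathcal{E}$. $\operatorname{Der}(\mathcal{A})$ denotes the $R$-linear derivations of $\mathcal{A}$. Set $\mathcal{C}^0(\mathcal{E})=\mathcal{A}$ and $\mathcal{C}^1(\mathcal{E})=\mathcal{E}$. For $r\ge2$, $\mathcal{C}^r(\mathcal{E})$ is the set of $\mathsf{C}\in\operatorname{Hom}_R(\mathcal{E}^{\otimes_R (r-1)},\mathcal{E})$ for which there is an $R$-multilinear map $\sigma_{\mathsf{C}}:\mathcal{E}^{\otimes_R(r-2)}\to\operatorname{Der}(\mathcal{A})$ (the symbol) satisfying two conditions: (1) $\sigma_{\mathsf{C}}(x_1,\dots,x_{r-2})\langle u,w\rangle=\langle \mathsf{C}(x_1,\dots,x_{r-2},u),w\rangle+\langle u,\mathsf{C}(x_1,\dots,x_{r-2},w)\rangle$ for all arguments; (2) if $r\ge3$, then for all $x_1,\dots,x_{r-1},u\in\mathcal{E}$ and $1\le i\le r-2$, $\langle \mathsf{C}(\dots,x_i,x_{i+1},\dots)+\mathsf{C}(\dots,x_{i+1},x_i,\dots),u\rangle=\sigma_{\mathsf{C}}(x_1,\dots,\widehat{x_i},\widehat{x_{i+1}},\dots,x_{r-1},u)\langle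 x_i,x_{i+1}\rangle$. For $r=2$ the symbol is a single derivation. For $\mathsf{C}\in\mathcal{C}^r(\mathcal{E})$ with $r\ge2$ and $x\in\mathcal{E}$, $i_x\mathsf{C}$ denotes $\mathsf{C}$ with $x$ inserted in the first argument. One has $i_x\mathsf{C}\in\mathcal{C}^{r-1}(\mathcal{E})$. The bracket $[\cdot,\cdot]$ is the unique $R$-bilinear, graded skew-symmetric map ($[\mathsf{C}_1,\mathsf{C}_2]=-(-1)^{rs}[\mathsf{C}_2,\mathsf{C}_1]$) sending $\mathcal{C}^r\times\mathcal{C}^s$ to $\mathcal{C}^{r+s-2}$ such that, for $a,b\in\mathcal{A}$, $x,y\in\mathcal{E}$, $\mathsf{D}\in\mathcal{C}^2(\mathcal{E})$ and $\mathsf{C}\in\mathcal{C}^r(\mathcal{E})$ with $r\ge2$: - $[a,b]=0$ and $[a,x]=0=[x,a]$; - $[x,y]=\langle x,y\rangle$; - $[\mathsf{D},a]=\sigma_{\mathsf{D}}(a)=-[a,\mathsf{D}]$; - $[\mathsf{C},x]=i_x\mathsf{C}=(-1)^{r+1}[x,\mathsf{C}]$; - the recursion $[[\mathsf{C}_1,\mathsf{C}_2],x]=i_x[\mathsf{C}_1,\mathsf{C}_2]=(-1)^s[[\mathsf{C}_1,x],\mathsf{C}_2]+[\mathsf{C}_1,[\mathsf{C}_2,x]]$ holds for $\mathsf{C}_1\in\mathcal{C}^r$, $\mathsf{C}_2\in\mathcal{C}^s$. The product $\wedge$ is the unique $R$-bilinear product of degree $0$ on $\mathcal{C}^\bullet(\mathcal{E})$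 such that $a\wedge b=ab$, $a\wedge x=ax=x\wedge a$, and $[\mathsf{C}_1\wedge\mathsf{C}_2,x]=(-1)^s[\mathsf{C}_1,x]\wedge\mathsf{C}_2+\mathsf{C}_1\wedge[\mathsf{C}_2,x]$ for $\mathsf{C}_1\in\mathcal{C}^r,\mathsf{C}_2\in\mathcal{C}^s$, $x\in\mathcal{E}$. *)

From HB Require Import structures.
From mathcomp Require Import all_boot all_order all_algebra.
Set Implicit Arguments.
Unset Strict Implicit.
Unset Printing Implicit Defensive.
Import GRing.Theory.
Local Open Scope ring_scope.

(* "Q is contained in R": every positive integer is invertible in R. *)
Definition Q_in_ring (R : comNzRingType) : Prop :=
  forall n : nat, (0 < n)%N -> exists y : R, y * n%:R = 1.

Section Setting.
Variables (R : comNzRingType) (A : comAlgType R) (E : lmodType A).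

(* the R-module structure of E, by restriction of scalars along R -> A *)
Definition rs (c : R) (x : E) : E := c%:A *: x.

Definition A_linear_map (V W : lmodType A) (f : V -> W) : Prop :=
  forall (c : A) (x y : V), f (c *: x + y) = c *: f x + f y.

(* finitely generated projective = direct summand (retract) of some A^n *)
Definition fg_projective : Prop :=
  exists (n : nat) (i : E -> 'rV[A]_n) (p : 'rV[A]_n -> E),
    A_linear_map i /\ A_linear_map p /\ cancel i p.

Definition is_derivation (delta : A -> A) : Prop :=
  (forall (c : R) (a b : A), delta (c *: a + b) = c *: delta a + delta b) /\
  (forall a b : A, delta (a * b) = delta a * b + a * delta b).

(* An R-multilinear map E^n -> E, encoded as a function on lists which is only
   evaluated on lists of length n. *)
Definition multilinE (n : nat) (f : seq E -> E) : Prop :=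
  forall (p q : seq E) (x y : E) (c : R), (size p + size q).+1 = n ->
    f (p ++ (rs c x + y) :: q) = rs c (f (p ++ x :: q)) + f (p ++ y :: q).

Definition multilinDer (n : nat) (sigma : seq E -> A -> A) : Prop :=
  (forall xs, size xs = n -> is_derivation (sigma xs)) /\
  (forall (p q : seq E) (x y : E) (c : R) (a : A), (size p + size q).+1 = n ->
    sigma (p ++ (rs c x + y) :: q) a
      = c *: sigma (p ++ x :: q) a + sigma (p ++ y :: q) a).

Variable g : E -> E -> A.

Definition form_is_symmetric : Prop := forall x y, g x y = g y x.

Definition form_is_A_bilinear : Prop :=
  (forall (c : A) x y z, g (c *: x + y) z = c * g x z + g y z) /\
  (forall (c : A) x y z, g x (c *: y + z) = c * g x y + g x z).

(* E -> Hom_A(E, A), x |-> <x, .>, is bijective *)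
Definition form_is_strongly_nondegenerate : Prop :=
  forall phi : E -> A,
    (forall (c : A) x y, phi (c *: x + y) = c * phi x + phi y) ->
    exists! x : E, forall y, phi y = g x y.

Definition form_is_full : Prop :=
  forall a : A, exists s : seq (E * E), a = \sum_(p <- s) g p.1 p.2.

(* sigma is a symbol for the (r-1)-ary map f (r >= 2): conditions (1) and (2) *)
Definition symbol_spec (r : nat) (f : seq E -> E) (sigma : seq E -> A -> A) : Prop :=
  multilinDer (r - 2) sigma /\
  (forall (xs : seq E) (u w : E), size xs = (r - 2)%N ->
     sigma xs (g u w) = g (f (rcons xs u)) w + g u (f (rcons xs w))) /\
  ((3 <= r)%N -> forall (p q : seq E) (x y u : E), (size p + size q + 3)%N = r ->
     g (f (p ++ x :: y :: q) + f (p ++ y :: x :: q)) u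
       = sigma (p ++ q ++ [:: u]) (g x y)).

(* f (on lists of length r-1) is an element of C^r(E), r >= 2 *)
Definition is_cochain (r : nat) (f : seq E -> E) : Prop :=
  multilinE r.-1 f /\ exists sigma, symbol_spec r f sigma.

(* Ambient type for C^.(E) = (+)_r C^r(E): the A-component (degree 0) and a
   function on lists; its restriction to lists of length r-1 is the degree r
   component (r >= 1).  The degree-1 component is the value at [::]. *)
Record D := mkD { d0 : A ; d1 : seq E -> E }.

Definition zeroD : D := mkD 0 (fun _ => 0).
Definition addD (u v : D) : D := mkD (d0 u + d0 v) (fun xs => d1 u xs + d1 v xs).
Definition oppD (u : D) : D := mkD (- d0 u) (fun xs => - d1 u xs).
Definition scaleD (c : R) (u : D) : D := mkD (c *: d0 u) (fun xs => rs c (d1 u xs)).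
Definition signD (b : bool) (u : D) : D := if b then oppD u else u.

Definition ofA (a : A) : D := mkD a (fun _ => 0).
Definition ofE (x : E) : D := mkD 0 (fun xs => if xs is [::] then x else 0).
Definition ins (x : E) (u : D) : D := mkD 0 (fun xs => d1 u (x :: xs)).

Definition homog (r : nat) (u : D) : Prop :=
  if r is 0 then forall xs, d1 u xs = 0
  else d0 u = 0 /\ forall xs, size xs != r.-1 -> d1 u xs = 0.

(* u is an element of C^.(E) (finite direct sum, components in C^r(E)) *)
Definition inC (u : D) : Prop :=
  (exists N, forall xs, (N <= size xs)%N -> d1 u xs = 0) /\
  (forall r, (2 <= r)%N -> is_cochain r (d1 u)).

Definition inCr (r : nat) (u : D) : Prop := homog r u /\ inC u.

Record bracket_spec (br : D -> D -> D) : Prop := {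
  br_linl : forall (c : R) u v w, inC u -> inC v -> inC w ->
    br (addD (scaleD c u) v) w = addD (scaleD c (br u w)) (br v w);
  br_linr : forall (c : R) u v w, inC u -> inC v -> inC w ->
    br w (addD (scaleD c u) v) = addD (scaleD c (br w u)) (br w v);
  br_deg : forall r s u v, inCr r u -> inCr s v ->
    if (2 <= r + s)%N then inCr (r + s - 2) (br u v) else br u v = zeroD;
  br_skew : forall r s u v, inCr r u -> inCr s v ->
    br u v = signD (~~ odd (r * s)) (br v u);
  br_AA : forall a b, br (ofA a) (ofA b) = zeroD;
  br_AE : forall a x, br (ofA a) (ofE x) = zeroD /\ br (ofE x) (ofA a) = zeroD;
  br_EE : forall x y, br (ofE x) (ofE y) = ofA (g x y);
  br_2A : forall u sigma a, inCr 2 u -> symbol_spec 2 (d1 u) sigma ->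
    br u (ofA a) = ofA (sigma [::] a) /\ br (ofA a) u = oppD (ofA (sigma [::] a));
  br_rE : forall r u x, (2 <= r)%N -> inCr r u ->
    br u (ofE x) = ins x u /\ br (ofE x) u = signD (odd r.+1) (ins x u);
  br_rec : forall r s u v x, inCr r u -> inCr s v ->
    br (br u v) (ofE x)
      = addD (signD (odd s) (br (br u (ofE x)) v)) (br u (br v (ofE x)))
}.

Record wedge_spec (br wd : D -> D -> D) : Prop := {
  wd_linl : forall (c : R) u v w, inC u -> inC v -> inC w ->
    wd (addD (scaleD c u) v) w = addD (scaleD c (wd u w)) (wd v w);
  wd_linr : forall (c : R) u v w, inC u -> inC v -> inC w ->
    wd w (addD (scaleD c u) v) = addD (scaleD c (wd w u)) (wd w v);
  wd_deg : forall r s u v, inCr r u -> inCr s v -> inCr (r + s) (wd u v);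
  wd_AA : forall a b, wd (ofA a) (ofA b) = ofA (a * b);
  wd_AE : forall a x, wd (ofA a) (ofE x) = ofE (a *: x) /\ wd (ofE x) (ofA a) = ofE (a *: x);
  wd_rec : forall r s u v x, inCr r u -> inCr s v ->
    br (wd u v) (ofE x)
      = addD (signD (odd s) (wd (br u (ofE x)) v)) (wd u (br v (ofE x)))
}.

End Setting.

(* Each identity is first proved for homogeneous elements, by induction on the
   total degree.  A cochain of positive degree is determined by its insertions
   [C, x] (in degree 1 by nondegeneracy of the form), and the recursive
   characterizations of the bracket and the product express the insertion of x
   into both sides of an identity through the same identity in lower total
   degree.  This leaves the identities of low total degree, which only involve
   elements of A, of E and of C^2; a degree-2 cochain acts on A by its symbol,
   a derivation, and on E as an endomorphism.  Both sides are then additive in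
   the A-arguments, and since the form is full it suffices to compare them on
   values <x, y>, where conditions (1) and (2) on the symbols decide.  Finally
   associativity of the product extends from homogeneous elements by
   additivity. *)

From HB Require Import structures.
From mathcomp Require Import all_boot all_order all_algebra.
From mathcomp Require Import ring zify boolp.
Set Implicit Arguments.
Unset Strict Implicit.
Unset Printing Implicit Defensive.
Import GRing.Theory.
Local Open Scope ring_scope.

(* [ring] only handles rings; an identity in a zmodType V is decided in the
   square-zero extension Z (+) V, into which V embeds additively. *)
Definition sqz_ext (V : zmodType) := (int * V)%type.
HB.instance Definition _ (V : zmodType) := GRing.Zmodule.on (sqz_ext V).

Section SquareZeroExtension.
Variable V : zmodType.
Implicit Types a b c : sqz_ext V.

Definition sqz_mul a b : sqz_ext V := (a.1 * b.1, a.2 *~ b.1 + b.2 *~ a.1).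
Definition sqz_one : sqz_ext V := (1, 0).

Lemma sqz_mulA : associative sqz_mul.
Proof.
move=> [n u] [m v] [k w]; rewrite /sqz_mul /=; congr pair; first by rewrite mulrA.
by rewrite !mulrzDl -!mulrzA addrA [k * n]mulrC [m * n]mulrC.
Qed.

Lemma sqz_mulC : commutative sqz_mul.
Proof. by move=> [n u] [m v]; rewrite /sqz_mul /= mulrC addrC. Qed.

Lemma sqz_mul1 : left_id sqz_one sqz_mul.
Proof. by move=> [n u]; rewrite /sqz_mul /= mul1r mul0rz add0r mulr1z. Qed.

Lemma sqz_mulDl : left_distributive sqz_mul +%R.
Proof.
move=> [n u] [m v] [k w]; rewrite /sqz_mul /=; congr pair; first by rewrite mulrDl.
rewrite mulrzDl mulrzDr -!addrA; congr (_ + _).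
by rewrite addrCA.
Qed.

Lemma sqz_one_neq0 : sqz_one != 0.
Proof. by apply/eqP => -[]. Qed.
End SquareZeroExtension.

HB.instance Definition _ (V : zmodType) :=
  GRing.Zmodule_isComNzRing.Build (sqz_ext V)
    (@sqz_mulA V) (@sqz_mulC V) (@sqz_mul1 V) (@sqz_mulDl V) (@sqz_one_neq0 V).

Definition sqz_in (V : zmodType) (x : V) : sqz_ext V := (0, x).

Lemma sqz_inD (V : zmodType) (x y : V) : sqz_in (x + y) = sqz_in x + sqz_in y.
Proof. by rewrite /sqz_in; congr pair; rewrite addr0. Qed.

Lemma sqz_inN (V : zmodType) (x : V) : sqz_in (- x) = - sqz_in x.
Proof. by rewrite /sqz_in; congr pair; rewrite oppr0. Qed.

Lemma sqz_in0 (V : zmodType) : sqz_in (0 : V) = 0.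
Proof. by []. Qed.

Lemma sqz_in_inj (V : zmodType) : injective (@sqz_in V).
Proof. by move=> x y []. Qed.

Ltac zmod_ring := apply: sqz_in_inj; rewrite ?(sqz_inD, sqz_inN, sqz_in0); ring.

HB.instance Definition _ (R : comNzRingType) (A : comAlgType R) (E : lmodType A) :=
  gen_eqMixin (D E).
HB.instance Definition _ (R : comNzRingType) (A : comAlgType R) (E : lmodType A) :=
  gen_choiceMixin (D E).

Section DZmodule.
Variables (R : comNzRingType) (A : comAlgType R) (E : lmodType A).

Lemma eqD (u v : D E) : d0 u = d0 v -> (forall xs, d1 u xs = d1 v xs) -> u = v.
Proof. by case: u v => [a f] [b h] /= -> H; congr mkD; apply: funext. Qed.

Lemma addDA : associative (@addD R A E).
Proof. by move=> u v w; apply: eqD => [|xs] /=; apply: addrA. Qed.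

Lemma addDC : commutative (@addD R A E).
Proof. by move=> u v; apply: eqD => [|xs] /=; apply: addrC. Qed.

Lemma add0D : left_id (zeroD E) (@addD R A E).
Proof. by move=> u; apply: eqD => [|xs] /=; apply: add0r. Qed.

Lemma addND : left_inverse (zeroD E) (@oppD R A E) (@addD R A E).
Proof. by move=> u; apply: eqD => [|xs] /=; apply: addNr. Qed.
End DZmodule.

HB.instance Definition _ (R : comNzRingType) (A : comAlgType R) (E : lmodType A) :=
  GRing.isZmodule.Build (D E) (@addDA R A E) (@addDC R A E) (@add0D R A E) (@addND R A E).

Section DBasics.
Variables (R : comNzRingType) (A : comAlgType R) (E : lmodType A).
Implicit Types (u v : D E) (x y : E).

Lemma scaleD1 u : scaleD 1 u = u.
Proof. by apply: eqD => [|xs] /=; rewrite ?/rs !scale1r. Qed.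

Lemma scaleDN1 u : scaleD (-1) u = - u.
Proof. by apply: eqD => [|xs] /=; rewrite ?/rs !scaleN1r. Qed.

Lemma rsD c x y : rs c (x + y) = rs c x + rs c y.
Proof. by rewrite /rs scalerDr. Qed.

Lemma rsN c x : rs c (- x) = - rs c x.
Proof. by rewrite /rs scalerN. Qed.

Lemma rs0 c : rs c (0 : E) = 0.
Proof. by rewrite /rs scaler0. Qed.

Lemma ofAD (a b : A) : ofA E (a + b) = ofA E a + ofA E b.
Proof. by apply: eqD => [|xs] //=; rewrite addr0. Qed.

Lemma ofED x y : ofE (x + y) = ofE x + ofE y.
Proof. by apply: eqD => [|[|z zs]] //=; rewrite addr0. Qed.

Lemma ofEN x : ofE (- x) = - ofE x.
Proof. by apply: eqD => [|[|z zs]] //=; rewrite oppr0. Qed.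

Lemma signDE b u : signD b u = if b then - u else u.
Proof. by []. Qed.

Lemma signD0 b : signD b (0 : D E) = 0.
Proof. by case: b => //=; apply: oppr0. Qed.

Lemma signDD b u v : signD b (u + v) = signD b u + signD b v.
Proof. by case: b => //=; apply: opprD. Qed.

Lemma signDK b c u : signD b (signD c u) = signD (b (+) c) u.
Proof. by case: b; case: c => //=; apply: opprK. Qed.
End DBasics.

Section LinearOn.
Variables (R : comNzRingType) (A : comAlgType R) (E : lmodType A).
Variables (P : D E -> Prop) (f : D E -> D E).
Hypothesis f_lin : forall (c : R) u v, P u -> P v ->
  f (addD (scaleD c u) v) = addD (scaleD c (f u)) (f v).
Hypothesis P0 : P 0.

Lemma linear_onD u v : P u -> P v -> f (u + v) = f u + f v.
Proof. by move=> Pu Pv; have := f_lin 1 Pu Pv; rewrite !scaleD1. Qed.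

Lemma linear_on0 : f 0 = 0.
Proof. by apply: (addrI (f 0)); rewrite addr0 -linear_onD ?addr0. Qed.

Lemma linear_onS b u : P u -> f (signD b u) = signD b (f u).
Proof.
case: b => //= Pu; have := f_lin (-1) Pu P0.
by rewrite !scaleDN1 linear_on0; change (f (- u + 0) = - f u + 0 -> f (- u) = - f u);
  rewrite !addr0.
Qed.
End LinearOn.

Section Cochains.
Variables (R : comNzRingType) (A : comAlgType R) (E : lmodType A) (g : E -> E -> A).
Hypotheses (g_bil : form_is_A_bilinear g) (g_sym : form_is_symmetric g).
Local Notation der := (@is_derivation R A).
Local Notation multilinE := (@multilinE R A E).
Local Notation multilinDer := (@multilinDer R A E).
Local Notation inC := (inC g).
Local Notation inCr := (inCr g).
Implicit Types (u v : D E) (x y z : E).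

Lemma gDl x y z : g (x + y) z = g x z + g y z.
Proof. by have := g_bil.1 1 x y z; rewrite scale1r mul1r. Qed.

Lemma g0l z : g 0 z = 0.
Proof. by apply: (addrI (g 0 z)); rewrite -gDl !addr0. Qed.

Lemma gZl c x z : g (c *: x) z = c * g x z.
Proof. by have := g_bil.1 c x 0 z; rewrite addr0 g0l addr0. Qed.

Lemma gNl x z : g (- x) z = - g x z.
Proof. by rewrite -scaleN1r gZl mulN1r. Qed.

Lemma gDr x y z : g z (x + y) = g z x + g z y.
Proof. by rewrite !(g_sym z) gDl. Qed.

Lemma g0r z : g z 0 = 0.
Proof. by rewrite g_sym g0l. Qed.

Lemma gZr c x z : g z (c *: x) = c * g z x.
Proof. by rewrite !(g_sym z) gZl. Qed.

Lemma gNr x z : g z (- x) = - g z x.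
Proof. by rewrite !(g_sym z) gNl. Qed.

Lemma der0 : der (fun _ => 0).
Proof. by split=> *; rewrite ?scaler0 ?mulr0 ?mul0r !addr0. Qed.

Lemma der_add d1 d2 : der d1 -> der d2 -> der (fun a => d1 a + d2 a).
Proof.
case=> H1 K1 [H2 K2]; split=> *; first by rewrite H1 H2 scalerDr; zmod_ring.
by rewrite K1 K2 mulrDl mulrDr; ring.
Qed.

Lemma der_opp d : der d -> der (fun a => - d a).
Proof.
case=> H K; split=> *; first by rewrite H scalerN opprD.
by rewrite K mulNr mulrN opprD.
Qed.

Lemma multilinE0 n : multilinE n (fun _ : seq E => 0).
Proof. by move=> *; rewrite rs0 addr0. Qed.

Lemma multilinE_add n f h :
  multilinE n f -> multilinE n h -> multilinE n (fun xs => f xs + h xs).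
Proof. by move=> Hf Hh p q x y c Hs; rewrite Hf // Hh // rsD; zmod_ring. Qed.

Lemma multilinE_opp n f : multilinE n f -> multilinE n (fun xs => - f xs).
Proof. by move=> Hf p q x y c Hs; rewrite Hf // rsN opprD. Qed.

Lemma multilinDer0 n : multilinDer n (fun (_ : seq E) _ => 0).
Proof. by split=> *; [apply: der0 | rewrite scaler0 addr0]. Qed.

Lemma multilinDer_add n s1 s2 : multilinDer n s1 -> multilinDer n s2 ->
  multilinDer n (fun xs a => s1 xs a + s2 xs a).
Proof.
case=> H1 K1 [H2 K2]; split=> [xs Hxs|p q x y c a Hs].
  exact: der_add (H1 _ Hxs) (H2 _ Hxs).
by rewrite K1 // K2 // scalerDr; zmod_ring.
Qed.

Lemma multilinDer_opp n s : multilinDer n s -> multilinDer n (fun xs a => - s xs a).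
Proof.
case=> H K; split=> [xs Hxs|p q x y c a Hs]; first exact: der_opp (H _ Hxs).
by rewrite K // scalerN opprD.
Qed.

Lemma cochain0 r : is_cochain g r (fun _ => 0).
Proof.
split; first exact: multilinE0.
exists (fun _ _ => 0); split; first exact: multilinDer0.
split=> [xs u w _|_ p q x y u _]; first by rewrite g0l g0r addr0.
by rewrite addr0 g0l.
Qed.

Lemma cochain_add r f h : is_cochain g r f -> is_cochain g r h ->
  is_cochain g r (fun xs => f xs + h xs).
Proof.
case=> Mf [s1 [D1 [C1 S1]]] [Mh [s2 [D2 [C2 S2]]]].
split; first exact: multilinE_add.
exists (fun xs a => s1 xs a + s2 xs a); split; first exact: multilinDer_add.
split=> [xs u w Hs|Hr p q x y u Hs]; first by rewrite C1 // C2 // !gDl !gDr; ring.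
by rewrite -S1 // -S2 // !gDl; ring.
Qed.

Lemma cochain_opp r f : is_cochain g r f -> is_cochain g r (fun xs => - f xs).
Proof.
case=> Mf [s1 [D1 [C1 S1]]]; split; first exact: multilinE_opp.
exists (fun xs a => - s1 xs a); split; first exact: multilinDer_opp.
split=> [xs u w Hs|Hr p q x y u Hs]; first by rewrite C1 // !gNl !gNr opprD.
by rewrite -S1 // !gDl !gNl opprD.
Qed.

Lemma eq_cochain r f h : (2 <= r)%N -> (forall xs, size xs = r.-1 -> f xs = h xs) ->
  is_cochain g r f -> is_cochain g r h.
Proof.
move=> Hr Efh [Mf [s [Ds [C S]]]]; split.
  by move=> p q x y c Hs; rewrite -!Efh ?Mf // size_cat /= -Hs; lia.
exists s; split=> //; split=> [xs u w Hs|Hr3 p q x y u Hs].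
  by rewrite -!Efh ?C // size_rcons Hs; lia.
by rewrite -!Efh ?S // size_cat /= -Hs; lia.
Qed.

Lemma inC0 : inC 0.
Proof. by split=> [|r _]; [exists 0%N | apply: cochain0]. Qed.

Lemma inCD u v : inC u -> inC v -> inC (u + v).
Proof.
case=> [[N1 H1] C1] [[N2 H2] C2]; split.
  by exists (maxn N1 N2) => xs Hxs; rewrite /= H1 ?H2 ?addr0 //; lia.
by move=> r Hr; apply: cochain_add; [apply: C1 | apply: C2].
Qed.

Lemma inCS b u : inC u -> inC (signD b u).
Proof.
case: b => // -[[N H] C]; split; first by exists N => xs Hxs; rewrite /= H ?oppr0.
by move=> r Hr; apply: cochain_opp; apply: C.
Qed.

Lemma inCN u : inC u -> inC (- u).
Proof. exact: (inCS true). Qed.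

Lemma homogD r u v : homog r u -> homog r v -> homog r (u + v).
Proof.
case: r => [H1 H2 xs|r [H1 K1] [H2 K2]]; first by rewrite /= H1 H2 addr0.
by split=> [|xs Hxs]; rewrite /= ?H1 ?H2 ?addr0 // K1 ?K2 ?addr0.
Qed.

Lemma homogN r u : homog r u -> homog r (- u).
Proof.
case: r => [H1 xs|r [H1 K1]]; first by rewrite /= H1 oppr0.
by split=> [|xs Hxs]; rewrite /= ?H1 ?oppr0 // K1 ?oppr0.
Qed.

Lemma inCr0 r : inCr r 0.
Proof. by split; [case: r | apply: inC0]. Qed.

Lemma inCrD r u v : inCr r u -> inCr r v -> inCr r (u + v).
Proof. by case=> H1 K1 [H2 K2]; split; [apply: homogD | apply: inCD]. Qed.

Lemma inCrS r b u : inCr r u -> inCr r (signD b u).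
Proof. by case: b => // -[H K]; split; [apply: homogN | apply: inCN]. Qed.

Lemma inCr_inC r u : inCr r u -> inC u.
Proof. by case. Qed.

Lemma inCr_ofA a : inCr 0 (ofA E a).
Proof. by split=> //; split=> [|r _]; [exists 0%N | apply: cochain0]. Qed.

Lemma inCr_ofE x : inCr 1 (ofE x).
Proof.
split; first by split=> // -[].
split=> [|r Hr]; first by exists 1%N => -[].
by apply: (eq_cochain (f := fun _ => 0)) (cochain0 _) => // -[] //=; lia.
Qed.

Lemma inCr0E u : inCr 0 u -> u = ofA E (d0 u).
Proof. by case=> H _; apply: eqD => //= xs; rewrite H. Qed.

Lemma inCr1E u : inCr 1 u -> u = ofE (d1 u [::]).
Proof. by case=> -[H0 H1] _; apply: eqD => //= -[|x xs] //; rewrite H1. Qed.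

Lemma inC_ind (P : D E -> Prop) : (forall r u, inCr r u -> P u) ->
  (forall u v, inC u -> inC v -> P u -> P v -> P (u + v)) -> forall u, inC u -> P u.
Proof.
move=> Phom PD u [[N HN] HC]; elim: N u HN HC => [|M IH] u HN HC.
  by apply: (Phom 0%N); split; [move=> xs; apply: HN | split=> //; exists 0%N].
pose top := mkD 0 (fun xs => if size xs == M then d1 u xs else 0).
pose rest := mkD (d0 u) (fun xs => if size xs == M then 0 else d1 u xs).
have Hu : u = rest + top.
  by apply: eqD => [|xs] /=; rewrite ?addr0 //; case: ifP; rewrite ?add0r ?addr0.
have Htop : inCr M.+1 top.
  split; first by split=> //= xs /negPf ->.
  split; first by exists M.+1 => xs Hxs /=; case: eqP => // Hs; lia.
  move=> r Hr; case: (eqVneq r.-1 M) => Hr1.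
    by apply: (eq_cochain (f := d1 u)) (HC _ Hr) => // xs Hs /=; rewrite Hs Hr1 eqxx.
  apply: (eq_cochain (f := fun _ => 0)) (cochain0 _) => // xs Hs /=.
  by rewrite Hs (negPf Hr1).
have Crest : inC rest.
  have -> : rest = u - top by rewrite Hu addrK.
  apply: inCD; last exact: inCN (inCr_inC Htop).
  by split=> //; exists M.+1.
rewrite Hu; apply: PD (Phom _ _ Htop) => //; first exact: inCr_inC Htop.
apply: IH; last by case: Crest.
by move=> xs Hxs /=; case: eqP => // Hs; apply: HN; lia.
Qed.

Section Bracket.
Variables (br wd : D E -> D E -> D E).
Hypotheses (g_nondeg : form_is_strongly_nondegenerate g) (g_full : form_is_full g).
Hypotheses (brS : bracket_spec g br) (wdS : wedge_spec g br wd).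

Let br_linl_at w : inC w -> forall c u v, inC u -> inC v ->
  br (addD (scaleD c u) v) w = addD (scaleD c (br u w)) (br v w).
Proof. by move=> Cw c u v Cu Cv; apply: (br_linl brS c Cu Cv Cw). Qed.

Let br_linr_at w : inC w -> forall c u v, inC u -> inC v ->
  br w (addD (scaleD c u) v) = addD (scaleD c (br w u)) (br w v).
Proof. by move=> Cw c u v Cu Cv; apply: (br_linr brS c Cu Cv Cw). Qed.

Let wd_linl_at w : inC w -> forall c u v, inC u -> inC v ->
  wd (addD (scaleD c u) v) w = addD (scaleD c (wd u w)) (wd v w).
Proof. by move=> Cw c u v Cu Cv; apply: (wd_linl wdS c Cu Cv Cw). Qed.

Let wd_linr_at w : inC w -> forall c u v, inC u -> inC v ->
  wd w (addD (scaleD c u) v) = addD (scaleD c (wd w u)) (wd w v).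
Proof. by move=> Cw c u v Cu Cv; apply: (wd_linr wdS c Cu Cv Cw). Qed.

Lemma brDl u v w : inC u -> inC v -> inC w -> br (u + v) w = br u w + br v w.
Proof. by move=> Cu Cv /br_linl_at/linear_onD; apply. Qed.

Lemma brDr u v w : inC u -> inC v -> inC w -> br w (u + v) = br w u + br w v.
Proof. by move=> Cu Cv /br_linr_at/linear_onD; apply. Qed.

Lemma wdDl u v w : inC u -> inC v -> inC w -> wd (u + v) w = wd u w + wd v w.
Proof. by move=> Cu Cv /wd_linl_at/linear_onD; apply. Qed.

Lemma wdDr u v w : inC u -> inC v -> inC w -> wd w (u + v) = wd w u + wd w v.
Proof. by move=> Cu Cv /wd_linr_at/linear_onD; apply. Qed.

Lemma br0l w : inC w -> br 0 w = 0.
Proof. by move/br_linl_at/linear_on0; apply; apply: inC0. Qed.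

Lemma br0r w : inC w -> br w 0 = 0.
Proof. by move/br_linr_at/linear_on0; apply; apply: inC0. Qed.

Lemma wd0l w : inC w -> wd 0 w = 0.
Proof. by move/wd_linl_at/linear_on0; apply; apply: inC0. Qed.

Lemma wd0r w : inC w -> wd w 0 = 0.
Proof. by move/wd_linr_at/linear_on0; apply; apply: inC0. Qed.

Lemma brSl b u w : inC u -> inC w -> br (signD b u) w = signD b (br u w).
Proof. by move=> Cu /br_linl_at/linear_onS; apply=> //; apply: inC0. Qed.

Lemma brSr b u w : inC u -> inC w -> br w (signD b u) = signD b (br w u).
Proof. by move=> Cu /br_linr_at/linear_onS; apply=> //; apply: inC0. Qed.

Lemma wdSl b u w : inC u -> inC w -> wd (signD b u) w = signD b (wd u w).
Proof. by move=> Cu /wd_linl_at/linear_onS; apply=> //; apply: inC0. Qed.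

Lemma wdSr b u w : inC u -> inC w -> wd w (signD b u) = signD b (wd w u).
Proof. by move=> Cu /wd_linr_at/linear_onS; apply=> //; apply: inC0. Qed.

Lemma inCr_br r s u v : inCr r u -> inCr s v -> inCr (r + s - 2) (br u v).
Proof. by move=> Hu Hv; have := br_deg brS Hu Hv; case: ifP => // _ ->; apply: inCr0. Qed.

Lemma br_eq0 r s u v : inCr r u -> inCr s v -> (r + s < 2)%N -> br u v = 0.
Proof. by move=> Hu Hv H; have := br_deg brS Hu Hv; rewrite leqNgt H. Qed.

Lemma inCr_wd r s u v : inCr r u -> inCr s v -> inCr (r + s) (wd u v).
Proof. exact: (wd_deg wdS). Qed.

Ltac solve_inCr := first [ eassumption | apply: inCr_ofE | apply: inCr_ofA | apply: inCr0
  | apply: inCr_br; solve_inCr | apply: inCr_wd; solve_inCr | apply: inCrS; solve_inCr ].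
Ltac solve_inC := first [ apply: inCD; solve_inC | apply: inCS; solve_inC | apply: inCN; solve_inC
  | apply: inC0 | apply: inCr_inC; solve_inCr ].
Ltac sign_ring :=
  rewrite ?oddD ?signDD ?signDK ?signDE;
  repeat match goal with |- context [odd ?n] => case: (odd n) end; rewrite /=; zmod_ring.
Ltac simpl_zero := repeat (rewrite ?br0l ?br0r ?wd0l ?wd0r ?signD0 ?add0r ?addr0 //; try solve_inC).

(* [br u v] has degree [r + s - 2] only when [r + s >= 2], and is 0 otherwise;
   for the sign rules only the parity of [r + s] matters. *)
Definition inCpar (b : bool) (m : nat) (u : D E) := inCr m u /\ (odd m = b \/ u = 0).

Lemma inCr_par r u : inCr r u -> inCpar (odd r) r u.
Proof. by split; [|left]. Qed.

Lemma inCpar_br r s u v : inCr r u -> inCr s v -> inCpar (odd (r + s)) (r + s - 2) (br u v).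
Proof.
move=> Hu Hv; split; first exact: inCr_br.
case: (leqP 2 (r + s)) => H; last by right; apply: br_eq0 Hu Hv H.
by left; rewrite -[in RHS](subnK H) addn2 /= negbK.
Qed.

Lemma inCpar_ins r u x : inCr r u -> inCpar (~~ odd r) r.-1 (br u (ofE x)).
Proof. by move=> Hu; have := inCpar_br Hu (inCr_ofE x); rewrite addn1 subn2. Qed.

Lemma inCpar_wd r s u v : inCr r u -> inCr s v -> inCpar (odd (r + s)) (r + s) (wd u v).
Proof. by move=> Hu Hv; apply/inCr_par/inCr_wd. Qed.

Lemma br_recE b m c k u v x : inCpar b m u -> inCpar c k v ->
  br (br u v) (ofE x) = signD c (br (br u (ofE x)) v) + br u (br v (ofE x)).
Proof.
move=> [Hu [_|->]] [Hv [<-|->]]; first exact: (br_rec brS x Hu Hv).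
all: simpl_zero.
Qed.

Lemma wd_recE b m c k u v x : inCpar b m u -> inCpar c k v ->
  br (wd u v) (ofE x) = signD c (wd (br u (ofE x)) v) + wd u (br v (ofE x)).
Proof.
move=> [Hu [_|->]] [Hv [<-|->]]; first exact: (wd_rec wdS x Hu Hv).
all: simpl_zero.
Qed.

Lemma br_skewE b m c k u v : inCpar b m u -> inCpar c k v ->
  br u v = signD (~~ (b && c)) (br v u).
Proof.
move=> [Hu [<-|->]] [Hv [<-|->]]; first by rewrite (br_skew brS Hu Hv) oddM.
all: simpl_zero.
Qed.

Lemma br_ins0 u x : inCr 0 u -> br u (ofE x) = 0.
Proof. by move=> Hu; apply: br_eq0 Hu (inCr_ofE x) _. Qed.

Lemma ins_cases r u x : inCr r u ->
  br u (ofE x) = 0 \/ exists2 r', r = r'.+1 & inCr r' (br u (ofE x)).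
Proof.
case: r => [|r] Hu; first by left; apply: br_ins0.
by right; exists r => //; apply: (inCpar_ins x Hu).1.
Qed.

Lemma ofE_inj x y : (forall z, g x z = g y z) -> x = y.
Proof.
move=> Hxy; have [z [_ Uz]] := g_nondeg (fun c => g_bil.2 c y).
by rewrite -(Uz x) ?(Uz y).
Qed.

Lemma eq_from_ins k u v : (0 < k)%N -> inCr k u -> inCr k v ->
  (forall x, br u (ofE x) = br v (ofE x)) -> u = v.
Proof.
case: k => // -[_|k _] Hu Hv H.
  rewrite (inCr1E Hu) (inCr1E Hv) in H *; congr ofE; apply: ofE_inj => z.
  by have := H z; rewrite !(br_EE brS) => /(congr1 (@d0 _ _ _)).
have [Hu0 Hu1] := Hu.1; have [Hv0 Hv1] := Hv.1.
apply: eqD => [|[|x xs]]; first by rewrite Hu0 Hv0.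
  by rewrite Hu1 ?Hv1.
have := H x; rewrite (br_rE brS x _ Hu).1 ?(br_rE brS x _ Hv).1 //.
by move=> /(congr1 (fun z : D E => d1 z xs)).
Qed.

Lemma additive_eq_on_form (f h : A -> A) :
  (forall a b, f (a + b) = f a + f b) -> (forall a b, h (a + b) = h a + h b) ->
  (forall x y, f (g x y) = h (g x y)) -> f =1 h.
Proof.
move=> fD hD Efh a; have [s ->] := g_full a.
have f0 : f 0 = 0 by apply: (addrI (f 0)); rewrite -fD !addr0.
have h0 : h 0 = 0 by apply: (addrI (h 0)); rewrite -hD !addr0.
elim: s => [|[x y] s IH]; first by rewrite !big_nil f0 h0.
by rewrite !big_cons fD hD IH Efh.
Qed.

Lemma wdC_deg0 u v : inCr 0 u -> inCr 0 v -> wd u v = wd v u.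
Proof. by move=> Hu Hv; rewrite (inCr0E Hu) (inCr0E Hv) !(wd_AA wdS) mulrC. Qed.

Lemma wdA_deg0 u v w : inCr 0 u -> inCr 0 v -> inCr 0 w -> wd (wd u v) w = wd u (wd v w).
Proof.
by move=> Hu Hv Hw; rewrite (inCr0E Hu) (inCr0E Hv) (inCr0E Hw) !(wd_AA wdS) mulrA.
Qed.

Lemma wdC r s u v : inCr r u -> inCr s v -> wd u v = signD (odd r && odd s) (wd v u).
Proof.
suff IH n : forall r s u v, (r + s <= n)%N -> inCr r u -> inCr s v ->
    wd u v = signD (odd r && odd s) (wd v u) by apply: IH.
elim: n => [|n IH] {}r {}s {}u {}v Hn Hu Hv; have [rs0|rs_gt0] := posnP (r + s); try lia.
1,2: have [r0 s0] : r = 0%N /\ s = 0%N by lia.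
1,2: by subst; apply: wdC_deg0.
apply: (eq_from_ins rs_gt0); first exact: inCr_wd.
  by apply: inCrS; rewrite addnC; apply: inCr_wd.
move=> x.
have Eu : wd (br u (ofE x)) v = signD (~~ odd r && odd s) (wd v (br u (ofE x))).
  have [->|[r' Er Hux]] := ins_cases x Hu; first by simpl_zero.
  by subst r; rewrite /= negbK; apply: IH Hux Hv; lia.
have Ev : wd u (br v (ofE x)) = signD (odd r && ~~ odd s) (wd (br v (ofE x)) u).
  have [->|[s' Es Hvx]] := ins_cases x Hv; first by simpl_zero.
  by subst s; rewrite /= negbK; apply: IH Hu Hvx; lia.
rewrite (wd_recE x (inCr_par Hu) (inCr_par Hv)) brSl; try solve_inC.
rewrite (wd_recE x (inCr_par Hv) (inCr_par Hu)) Eu Ev.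
by sign_ring.
Qed.

Lemma wdA_hom r s t u v w : inCr r u -> inCr s v -> inCr t w ->
  wd (wd u v) w = wd u (wd v w).
Proof.
suff IH n : forall r s t u v w, (r + s + t <= n)%N -> inCr r u -> inCr s v -> inCr t w ->
    wd (wd u v) w = wd u (wd v w) by apply: IH.
elim: n => [|n IH] {}r {}s {}t {}u {}v {}w Hn Hu Hv Hw;
  have [rst0|rst_gt0] := posnP (r + s + t); try lia.
1,2: have [r0 [s0 t0]] : r = 0%N /\ s = 0%N /\ t = 0%N by lia.
1,2: by subst; apply: wdA_deg0.
apply: (eq_from_ins rst_gt0); first by solve_inCr.
  by rewrite -addnA; solve_inCr.
move=> x.
have Eu : wd (wd (br u (ofE x)) v) w = wd (br u (ofE x)) (wd v w).
  have [->|[r' Er Hux]] := ins_cases x Hu; first by simpl_zero.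
  by subst r; apply: IH Hux Hv Hw; lia.
have Ev : wd (wd u (br v (ofE x))) w = wd u (wd (br v (ofE x)) w).
  have [->|[s' Es Hvx]] := ins_cases x Hv; first by simpl_zero.
  by subst s; apply: IH Hu Hvx Hw; lia.
have Ew : wd (wd u v) (br w (ofE x)) = wd u (wd v (br w (ofE x))).
  have [->|[t' Et Hwx]] := ins_cases x Hw; first by simpl_zero.
  by subst t; apply: IH Hu Hv Hwx; lia.
rewrite (wd_recE x (inCpar_wd Hu Hv) (inCr_par Hw)) (wd_recE x (inCr_par Hu) (inCr_par Hv)).
rewrite (wd_recE x (inCr_par Hu) (inCpar_wd Hv Hw)) (wd_recE x (inCr_par Hv) (inCr_par Hw)).
rewrite wdDl ?wdSl ?wdDr ?wdSr ?Eu ?Ev ?Ew; try solve_inC.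
by sign_ring.
Qed.

Definition jacobi_at r s u v w :=
  br u (br v w) = br (br u v) w + signD (odd r && odd s) (br v (br u w)).

Definition jacobi_in r s t :=
  forall u v w, inCr r u -> inCr s v -> inCr t w -> jacobi_at r s u v w.

Lemma inCr_br_brr r s t u v w : inCr r u -> inCr s v -> inCr t w ->
  inCr (r + s + t - 4) (br u (br v w)).
Proof.
move=> Hu Hv Hw; case: (leqP 2 (s + t)) => H; last by rewrite (br_eq0 Hv Hw H); simpl_zero; apply: inCr0.
have -> : (r + s + t - 4 = r + (s + t - 2) - 2)%N by lia.
by solve_inCr.
Qed.

Lemma inCr_br_brl r s t u v w : inCr r u -> inCr s v -> inCr t w ->
  inCr (r + s + t - 4) (br (br u v) w).
Proof.
move=> Hu Hv Hw; case: (leqP 2 (r + s)) => H; last by rewrite (br_eq0 Hu Hv H); simpl_zero; apply: inCr0.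
have -> : (r + s + t - 4 = (r + s - 2) + t - 2)%N by lia.
by solve_inCr.
Qed.

Lemma br_brr_eq0 r s t u v w : inCr r u -> inCr s v -> inCr t w -> (r + s + t <= 3)%N ->
  br u (br v w) = 0.
Proof.
move=> Hu Hv Hw Hn; case: (leqP 2 (s + t)) => H; last by rewrite (br_eq0 Hv Hw H); simpl_zero.
by apply: (br_eq0 Hu (inCr_br Hv Hw)); lia.
Qed.

Lemma br_brl_eq0 r s t u v w : inCr r u -> inCr s v -> inCr t w -> (r + s + t <= 3)%N ->
  br (br u v) w = 0.
Proof.
move=> Hu Hv Hw Hn; case: (leqP 2 (r + s)) => H; last by rewrite (br_eq0 Hu Hv H); simpl_zero.
by apply: (br_eq0 (inCr_br Hu Hv) Hw); lia.
Qed.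

Lemma jacobi_low r s t : (r + s + t <= 3)%N -> jacobi_in r s t.
Proof.
move=> Hn u v w Hu Hv Hw; rewrite /jacobi_at (br_brr_eq0 Hu Hv Hw) ?(br_brl_eq0 Hu Hv Hw) //.
by rewrite (br_brr_eq0 Hv Hu Hw) ?signD0 ?addr0 //; lia.
Qed.

Lemma jacobi_swap12 r s t : jacobi_in r s t -> jacobi_in s r t.
Proof.
move=> J u v w Hu Hv Hw; rewrite /jacobi_at (J v u w Hv Hu Hw).
rewrite (br_skewE (inCr_par Hu) (inCr_par Hv)) brSl; try solve_inC.
by sign_ring.
Qed.

Lemma jacobi_swap23 r s t : jacobi_in r s t -> jacobi_in r t s.
Proof.
move=> J u v w Hu Hv Hw; rewrite /jacobi_at.
rewrite (br_skewE (inCr_par Hv) (inCr_par Hw)) brSr; try solve_inC.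
rewrite (J u w v Hu Hw Hv) (br_skewE (inCpar_br Hu Hv) (inCr_par Hw)).
by rewrite (br_skewE (inCr_par Hv) (inCpar_br Hu Hw)); sign_ring.
Qed.

(* In degree 1 the Jacobi identity is the defining recursion of the bracket. *)
Lemma jacobi_deg1r r s : jacobi_in r s 1.
Proof.
move=> u v w Hu Hv Hw; rewrite /jacobi_at (inCr1E Hw); set x := d1 w [::].
rewrite (br_recE x (inCr_par Hu) (inCr_par Hv)) (br_skewE (inCr_par Hv) (inCpar_ins x Hu)).
by sign_ring.
Qed.

(* For X in C^2, [symb2 X] is its symbol sigma_X, read off from [X, a], and
   [op2 X] is X itself as a map E -> E. *)
Definition symb2 (X : D E) (a : A) : A := d0 (br X (ofA E a)).
Definition op2 (X : D E) (p : E) : E := d1 X [:: p].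

Lemma brAE a x : br (ofA E a) (ofE x) = 0.
Proof. exact: (br_AE brS a x).1. Qed.

Lemma brEE x y : br (ofE x) (ofE y) = ofA E (g x y).
Proof. exact: (br_EE brS x y). Qed.

Lemma br2A X a : inCr 2 X -> br X (ofA E a) = ofA E (symb2 X a).
Proof. by move=> HX; apply: inCr0E; apply: (inCr_br HX (inCr_ofA a)). Qed.

Lemma brA2 X a : inCr 2 X -> br (ofA E a) X = - ofA E (symb2 X a).
Proof. by move=> HX; rewrite (br_skewE (inCr_par (inCr_ofA a)) (inCr_par HX)) /= br2A. Qed.

Lemma br2E X p : inCr 2 X -> br X (ofE p) = ofE (op2 X p).
Proof.
move=> HX; rewrite (br_rE brS p (leqnn 2) HX).1; have [[_ HX1] _] := HX.
by apply: eqD => //= -[|y ys] //; rewrite HX1.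
Qed.

Lemma brE2 X p : inCr 2 X -> br (ofE p) X = - ofE (op2 X p).
Proof. by move=> HX; rewrite (br_skewE (inCr_par (inCr_ofE p)) (inCr_par HX)) /= br2E. Qed.

Lemma op2_eq X p y : inCr 2 X -> br X (ofE p) = ofE y -> op2 X p = y.
Proof. by move=> HX; rewrite br2E // => /(congr1 (fun z : D E => d1 z [::])). Qed.

Lemma form_op2 X p q : inCr 2 X -> g (op2 X p) q = d0 (br (br X (ofE p)) (ofE q)).
Proof. by move=> HX; rewrite (br2E p HX) brEE. Qed.

Lemma symb2D X a b : inCr 2 X -> symb2 X (a + b) = symb2 X a + symb2 X b.
Proof. by move=> HX; rewrite /symb2 ofAD brDr //; solve_inC. Qed.

Lemma symb2E X sigma a : inCr 2 X -> symbol_spec g 2 (d1 X) sigma -> symb2 X a = sigma [::] a.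
Proof. by move=> HX Hsig; rewrite /symb2 (br_2A brS a HX Hsig).1. Qed.

Lemma symbol2_exists X : inCr 2 X -> exists sigma, symbol_spec g 2 (d1 X) sigma.
Proof. by case=> _ [_ C]; have [_ ?] := C 2%N (leqnn 2). Qed.

Lemma symb2_form X p q : inCr 2 X -> symb2 X (g p q) = g (op2 X p) q + g p (op2 X q).
Proof.
by move=> HX; have [sigma Hsig] := symbol2_exists HX; rewrite (symb2E _ HX Hsig) Hsig.2.1.
Qed.

Lemma symb2M X a b : inCr 2 X -> symb2 X (a * b) = symb2 X a * b + a * symb2 X b.
Proof.
move=> HX; have [sigma Hsig] := symbol2_exists HX; rewrite !(symb2E _ HX Hsig).
by have [_ ->] := Hsig.1.1 [::] erefl.
Qed.

Lemma op2_br22 u v p : inCr 2 u -> inCr 2 v ->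
  op2 (br u v) p = op2 u (op2 v p) - op2 v (op2 u p).
Proof.
move=> Hu Hv; apply: op2_eq; first exact: (inCr_br Hu Hv).
rewrite (br_recE p (inCr_par Hu) (inCr_par Hv)) /= (br2E p Hu) (br2E p Hv).
by rewrite (br2E _ Hu) (brE2 _ Hv) ofED ofEN addrC.
Qed.

Lemma jacobi_220 : jacobi_in 2 2 0.
Proof.
move=> u v w Hu Hv Hw; rewrite /jacobi_at (inCr0E Hw); set a := d0 w.
have Huv : inCr 2 (br u v) := inCr_br Hu Hv.
rewrite (br2A _ Hv) (br2A _ Hu) (br2A _ Huv) (br2A _ Hu) (br2A _ Hv) /= -ofAD.
congr (ofA E _); apply: (additive_eq_on_form (f := fun a => symb2 u (symb2 v a))
   (h := fun a => symb2 (br u v) a + symb2 v (symb2 u a))) => [b c|b c|p q].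
- by rewrite !symb2D.
- by rewrite !symb2D //; ring.
rewrite !symb2_form // !symb2D // !symb2_form // !op2_br22 // !gDl !gDr !gNl !gNr; ring.
Qed.

Lemma br_ofA_ofE_comm r u a p : inCr r u ->
  br (br u (ofA E a)) (ofE p) = br (br u (ofE p)) (ofA E a).
Proof.
move=> Hu; rewrite (br_recE p (inCr_par Hu) (inCr_par (inCr_ofA a))) brAE br0r ?addr0 //.
by solve_inC.
Qed.

Section Degree4.
Variables (u : D E) (sigma : seq E -> A -> A).
Hypotheses (Hu : inCr 4 u) (Hsigma : symbol_spec g 4 (d1 u) sigma).

Lemma symb2_ins2 p q c : symb2 (br (br u (ofE p)) (ofE q)) c = sigma [:: p; q] c.
Proof.
have Hup : inCr 3 (br u (ofE p)) := inCr_br Hu (inCr_ofE p).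
have Hupq : inCr 2 (br (br u (ofE p)) (ofE q)) := inCr_br Hup (inCr_ofE q).
have Hupq_at xs : d1 (br (br u (ofE p)) (ofE q)) xs = d1 u [:: p, q & xs].
  by rewrite (br_rE brS q _ Hup).1 // (br_rE brS p _ Hu).1.
apply: (symb2E (sigma := fun _ => sigma [:: p; q]) c Hupq); split; last split => //.
  by split=> // xs _; apply: Hsigma.1.1.
by move=> [|//] u1 w1 _; rewrite !Hupq_at Hsigma.2.1.
Qed.

Lemma form_op2_br4A c p q : g (op2 (br u (ofA E c)) p) q = sigma [:: p; q] c.
Proof.
rewrite form_op2; last exact: (inCr_br Hu (inCr_ofA c)).
rewrite (br_ofA_ofE_comm _ _ Hu) (br_ofA_ofE_comm _ _ (inCr_br Hu (inCr_ofE p))).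
exact: symb2_ins2.
Qed.

(* Both sides are symmetric bi-additive in (a, b); on values of the form,
   conditions (1) and (2) on the symbol of [u] make them agree. *)
Lemma symb2_br4A_swap a b : symb2 (br u (ofA E a)) b = symb2 (br u (ofA E b)) a.
Proof.
have Hua c : inCr 2 (br u (ofA E c)) := inCr_br Hu (inCr_ofA c).
have symb2_brA_form c p q :
    symb2 (br u (ofA E c)) (g p q) = sigma [:: p; q] c + sigma [:: q; p] c.
  by rewrite symb2_form // !form_op2_br4A g_sym form_op2_br4A.
have symb2_brAD c d e : symb2 (br u (ofA E (c + d))) e =
    symb2 (br u (ofA E c)) e + symb2 (br u (ofA E d)) e.
  by rewrite /symb2 ofAD brDr ?brDl //; solve_inC.
have cond1 z1 z2 x1 x2 :
    sigma [:: z1; z2] (g x1 x2) = g (d1 u [:: z1; z2; x1]) x2 + g x1 (d1 u [:: z1; z2; x2]).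
  exact: (Hsigma.2.1 [:: z1; z2]).
have cond2 z1 z2 x1 x2 :
    sigma [:: z1; z2] (g x1 x2) = g (d1 u [:: x1; x2; z1] + d1 u [:: x2; x1; z1]) z2.
  by rewrite (Hsigma.2.2 isT [::] [:: z1]).
apply: (additive_eq_on_form (f := symb2 (br u (ofA E a)))
   (h := fun b => symb2 (br u (ofA E b)) a)) => [c d|c d|p q] //; first exact: symb2D.
apply: (additive_eq_on_form (f := fun a => symb2 (br u (ofA E a)) (g p q))
   (h := symb2 (br u (ofA E (g p q))))) => [c d|c d|y z] //; first exact: symb2D.
rewrite !symb2_brA_form ![in LHS]cond2 ![in RHS]cond1 !gDl !(g_sym p); ring.
Qed.
End Degree4.

Lemma jacobi_400 : jacobi_in 4 0 0.
Proof.
move=> u v w Hu Hv Hw; rewrite /jacobi_at (inCr0E Hv) (inCr0E Hw) (br_AA brS) br0r.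
  rewrite (br2A _ (inCr_br Hu (inCr_ofA _))) (brA2 _ (inCr_br Hu (inCr_ofA _))) /=.
  have [_ [sigma Hsigma]] := Hu.2.2 4%N isT.
  by rewrite (symb2_br4A_swap Hu Hsigma) subrr.
by solve_inC.
Qed.

(* Up to the swaps of graded skew-symmetry, a total degree of 4 either has a
   degree-1 entry or is (4, 0, 0) or (2, 2, 0). *)
Lemma jacobi_total4 r s t : (r + s + t = 4)%N -> jacobi_in r s t.
Proof.
have J040 := jacobi_swap12 jacobi_400; have J202 := jacobi_swap23 jacobi_220.
have J310 := jacobi_swap23 (@jacobi_deg1r 3 0); have J130 := jacobi_swap12 J310.
have J004 := jacobi_swap23 J040; have J022 := jacobi_swap12 J202.
have J103 := jacobi_swap23 J130; have J013 := jacobi_swap23 (@jacobi_deg1r 0 3).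
have J112 := jacobi_swap23 (@jacobi_deg1r 1 2).
have J400 := jacobi_400; have J220 := jacobi_220.
move=> H; case: t H => [|[|[|[|[|t]]]]] H; try exact: jacobi_deg1r; try lia;
case: s H => [|[|[|[|[|s]]]]] H; try lia;
by case: r H => [|[|[|[|[|r]]]]] H; try lia.
Qed.

Lemma jacobi_hom r s t : jacobi_in r s t.
Proof.
suff IH n : forall r s t, (r + s + t <= n)%N -> jacobi_in r s t by apply: IH.
elim: n => [|n IH] {}r {}s {}t Hn; first by apply: jacobi_low; lia.
case: (leqP (r + s + t) 3) => H3; first exact: jacobi_low.
case: (ltngtP (r + s + t) 4) => H4; [lia | | exact: jacobi_total4].
move=> u v w Hu Hv Hw; rewrite /jacobi_at.
apply: (@eq_from_ins (r + s + t - 4)); [lia | exact: inCr_br_brr | |].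
  apply: inCrD; first exact: inCr_br_brl.
  have -> : (r + s + t = s + r + t)%N by lia.
  by apply: inCrS; apply: inCr_br_brr.
move=> x.
have Eu : br (br u (ofE x)) (br v w) = br (br (br u (ofE x)) v) w +
    signD (~~ odd r && odd s) (br v (br (br u (ofE x)) w)).
  have [->|[r' Er Hux]] := ins_cases x Hu; first by simpl_zero.
  by subst r; rewrite /= negbK; apply: IH Hux Hv Hw; lia.
have Ev : br u (br (br v (ofE x)) w) = br (br u (br v (ofE x))) w +
    signD (odd r && ~~ odd s) (br (br v (ofE x)) (br u w)).
  have [->|[s' Es Hvx]] := ins_cases x Hv; first by simpl_zero.
  by subst s; rewrite /= negbK; apply: IH Hu Hvx Hw; lia.
have Ew : br u (br v (br w (ofE x))) = br (br u v) (br w (ofE x)) +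
    signD (odd r && odd s) (br v (br u (br w (ofE x)))).
  have [->|[t' Et Hwx]] := ins_cases x Hw; first by simpl_zero.
  by subst t; apply: IH Hu Hv Hwx; lia.
rewrite (br_recE x (inCr_par Hu) (inCpar_br Hv Hw)) (br_recE x (inCr_par Hv) (inCr_par Hw)).
rewrite brDl ?brSl; try solve_inC.
rewrite (br_recE x (inCpar_br Hu Hv) (inCr_par Hw)) (br_recE x (inCr_par Hu) (inCr_par Hv)).
rewrite (br_recE x (inCr_par Hv) (inCpar_br Hu Hw)) (br_recE x (inCr_par Hu) (inCr_par Hw)).
rewrite !brDr ?brSr ?brDl ?brSl ?Eu ?Ev ?Ew; try solve_inC.
by sign_ring.
Qed.

Definition leibniz_at r s u v w :=
  br u (wd v w) = wd (br u v) w + signD (odd r && odd s) (wd v (br u w)).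

Definition leibniz_in r s t :=
  forall u v w, inCr r u -> inCr s v -> inCr t w -> leibniz_at r s u v w.

Lemma inCr_br_wd r s t u v w : inCr r u -> inCr s v -> inCr t w ->
  inCr (r + s + t - 2) (br u (wd v w)).
Proof. by move=> Hu Hv Hw; rewrite -addnA; solve_inCr. Qed.

Lemma inCr_wd_brl r s t u v w : inCr r u -> inCr s v -> inCr t w ->
  inCr (r + s + t - 2) (wd (br u v) w).
Proof.
move=> Hu Hv Hw; case: (leqP 2 (r + s)) => H; last by rewrite (br_eq0 Hu Hv H); simpl_zero; apply: inCr0.
have -> : (r + s + t - 2 = (r + s - 2) + t)%N by lia.
by solve_inCr.
Qed.

Lemma inCr_wd_brr r s t u v w : inCr r u -> inCr s v -> inCr t w ->
  inCr (r + s + t - 2) (wd v (br u w)).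
Proof.
move=> Hu Hv Hw; case: (leqP 2 (r + t)) => H; last by rewrite (br_eq0 Hu Hw H); simpl_zero; apply: inCr0.
have -> : (r + s + t - 2 = s + (r + t - 2))%N by lia.
by solve_inCr.
Qed.

Lemma leibniz_low r s t : (r + s + t <= 1)%N -> leibniz_in r s t.
Proof.
move=> Hn u v w Hu Hv Hw; rewrite /leibniz_at (br_eq0 Hu (inCr_wd Hv Hw)); last lia.
by rewrite (br_eq0 Hu Hv) 1?(br_eq0 Hu Hw); try lia; simpl_zero.
Qed.

Lemma brEA a x : br (ofE x) (ofA E a) = 0.
Proof. exact: (br_AE brS a x).2. Qed.

Lemma op2_wdEE x y p : op2 (wd (ofE x) (ofE y)) p = - (g x p *: y) + g y p *: x.
Proof.
apply: op2_eq; first exact: (inCr_wd (inCr_ofE x) (inCr_ofE y)).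
rewrite (wd_recE p (inCr_par (inCr_ofE x)) (inCr_par (inCr_ofE y))) /= !brEE.
by rewrite (wd_AE wdS _ y).1 (wd_AE wdS _ x).2 ofED ofEN.
Qed.

Lemma op2_wd2A v b p : inCr 2 v -> op2 (wd v (ofA E b)) p = b *: op2 v p.
Proof.
move=> Hv; apply: op2_eq; first exact: (inCr_wd Hv (inCr_ofA b)).
rewrite (wd_recE p (inCr_par Hv) (inCr_par (inCr_ofA b))) /= brAE wd0r; last by solve_inC.
by rewrite addr0 (br2E _ Hv) (wd_AE wdS b (op2 v p)).2.
Qed.

Lemma op2_wdA2 w b p : inCr 2 w -> op2 (wd (ofA E b) w) p = b *: op2 w p.
Proof.
move=> Hw; apply: op2_eq; first exact: (inCr_wd (inCr_ofA b) Hw).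
rewrite (wd_recE p (inCr_par (inCr_ofA b)) (inCr_par Hw)) /= brAE wd0l; last by solve_inC.
by rewrite add0r (br2E _ Hw) (wd_AE wdS b (op2 w p)).1.
Qed.

Lemma leibniz_200 : leibniz_in 2 0 0.
Proof.
move=> u v w Hu Hv Hw; rewrite /leibniz_at (inCr0E Hv) (inCr0E Hw).
by rewrite (wd_AA wdS) !(br2A _ Hu) !(wd_AA wdS) /= -ofAD symb2M.
Qed.

Lemma leibniz_110 : leibniz_in 1 1 0.
Proof.
move=> u v w Hu Hv Hw; rewrite /leibniz_at (inCr1E Hu) (inCr1E Hv) (inCr0E Hw).
rewrite (wd_AE wdS _ _).2 !brEE brEA wd0r ?signD0 ?addr0; last by solve_inC.
by rewrite (wd_AA wdS) gZr mulrC.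
Qed.

Lemma leibniz_101 : leibniz_in 1 0 1.
Proof.
move=> u v w Hu Hv Hw; rewrite /leibniz_at (inCr1E Hu) (inCr0E Hv) (inCr1E Hw).
rewrite (wd_AE wdS _ _).1 !brEE brEA wd0l /=; last by solve_inC.
by rewrite (wd_AA wdS) add0r gZr.
Qed.

Lemma leibniz_020 : leibniz_in 0 2 0.
Proof.
move=> u v w Hu Hv Hw; rewrite /leibniz_at (inCr0E Hu) (inCr0E Hw); set a := d0 u.
set b := d0 w; have Hvb : inCr 2 (wd v (ofA E b)) := inCr_wd Hv (inCr_ofA b).
rewrite (br_AA brS) wd0r ?signD0 ?addr0; last by solve_inC.
rewrite !brA2 // (wdSl true) ?(wd_AA wdS) /=; try solve_inC.
congr (- ofA E _); apply: (additive_eq_on_form (f := symb2 (wd v (ofA E b)))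
   (h := fun a => symb2 v a * b)) => [c d|c d|p q]; rewrite ?symb2D ?mulrDl //.
by rewrite !symb2_form // !op2_wd2A // gZl gZr mulrDl; ring.
Qed.

Lemma leibniz_011 : leibniz_in 0 1 1.
Proof.
move=> u v w Hu Hv Hw; rewrite /leibniz_at (inCr0E Hu) (inCr1E Hv) (inCr1E Hw).
set a := d0 u; set x := d1 v [::]; set y := d1 w [::].
have Hxy : inCr 2 (wd (ofE x) (ofE y)) := inCr_wd (inCr_ofE x) (inCr_ofE y).
rewrite !brAE wd0l ?wd0r ?signD0 ?addr0; try solve_inC.
rewrite brA2 //; apply/eqP; rewrite oppr_eq0; apply/eqP.
suff -> : symb2 (wd (ofE x) (ofE y)) a = 0 by [].
apply: (additive_eq_on_form (f := symb2 (wd (ofE x) (ofE y))) (h := fun _ => 0))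
  => [c d|c d|p q]; rewrite ?symb2D ?addr0 //.
by rewrite symb2_form // !op2_wdEE gDl gDr !gNl !gNr !gZl !gZr !(g_sym p); ring.
Qed.

Lemma leibniz_002 : leibniz_in 0 0 2.
Proof.
move=> u v w Hu Hv Hw; rewrite /leibniz_at (inCr0E Hu) (inCr0E Hv); set a := d0 u.
set b := d0 v; have Hbw : inCr 2 (wd (ofA E b) w) := inCr_wd (inCr_ofA b) Hw.
rewrite (br_AA brS) wd0l; last by solve_inC.
rewrite !brA2 // (wdSr true) ?(wd_AA wdS) /= ?add0r; try solve_inC.
congr (- ofA E _); apply: (additive_eq_on_form (f := symb2 (wd (ofA E b) w))
   (h := fun a => b * symb2 w a)) => [c d|c d|p q]; rewrite ?symb2D ?mulrDr //.
by rewrite !symb2_form // !op2_wdA2 // gZl gZr mulrDr.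
Qed.

Lemma leibniz_total2 r s t : (r + s + t = 2)%N -> leibniz_in r s t.
Proof.
have := leibniz_200; have := leibniz_110; have := leibniz_101.
have := leibniz_020; have := leibniz_011; have := leibniz_002.
move=> ? ? ? ? ? ? H; case: t H => [|[|[|t]]] H; try lia;
case: s H => [|[|[|s]]] H; try lia;
by case: r H => [|[|[|r]]] H; try lia.
Qed.

Lemma leibniz_hom r s t : leibniz_in r s t.
Proof.
suff IH n : forall r s t, (r + s + t <= n)%N -> leibniz_in r s t by apply: IH.
elim: n => [|n IH] {}r {}s {}t Hn; first by apply: leibniz_low; lia.
case: (leqP (r + s + t) 1) => H1; first exact: leibniz_low.
case: (ltngtP (r + s + t) 2) => H2; [lia | | exact: leibniz_total2].
move=> u v w Hu Hv Hw; rewrite /leibniz_at.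
apply: (@eq_from_ins (r + s + t - 2)); [lia | exact: inCr_br_wd | |].
  by apply: inCrD; [exact: inCr_wd_brl | apply: inCrS; exact: inCr_wd_brr].
move=> x.
have Eu : br (br u (ofE x)) (wd v w) = wd (br (br u (ofE x)) v) w +
    signD (~~ odd r && odd s) (wd v (br (br u (ofE x)) w)).
  have [->|[r' Er Hux]] := ins_cases x Hu; first by simpl_zero.
  by subst r; rewrite /= negbK; apply: IH Hux Hv Hw; lia.
have Ev : br u (wd (br v (ofE x)) w) = wd (br u (br v (ofE x))) w +
    signD (odd r && ~~ odd s) (wd (br v (ofE x)) (br u w)).
  have [->|[s' Es Hvx]] := ins_cases x Hv; first by simpl_zero.
  by subst s; rewrite /= negbK; apply: IH Hu Hvx Hw; lia.
have Ew : br u (wd v (br w (ofE x))) = wd (br u v) (br w (ofE x)) +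
    signD (odd r && odd s) (wd v (br u (br w (ofE x)))).
  have [->|[t' Et Hwx]] := ins_cases x Hw; first by simpl_zero.
  by subst t; apply: IH Hu Hv Hwx; lia.
rewrite (br_recE x (inCr_par Hu) (inCpar_wd Hv Hw)) (wd_recE x (inCr_par Hv) (inCr_par Hw)).
rewrite brDl ?brSl; try solve_inC.
rewrite (wd_recE x (inCpar_br Hu Hv) (inCr_par Hw)) (br_recE x (inCr_par Hu) (inCr_par Hv)).
rewrite (wd_recE x (inCr_par Hv) (inCpar_br Hu Hw)) (br_recE x (inCr_par Hu) (inCr_par Hw)).
rewrite !brDr ?brSr ?wdDl ?wdSl ?wdDr ?wdSr ?Eu ?Ev ?Ew; try solve_inC.
by sign_ring.
Qed.

Lemma inC_wd u v : inC u -> inC v -> inC (wd u v).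
Proof.
move=> Cu; elim/inC_ind: Cu v => [r {}u Hu|u1 u2 C1 C2 IH1 IH2] v Cv.
  elim/inC_ind: Cv => [s {}v Hv|v1 v2 D1 D2 IH1 IH2]; first exact: inCr_inC (inCr_wd Hu Hv).
  by rewrite wdDr //; [apply: inCD | apply: inCr_inC Hu].
by rewrite wdDl //; apply: inCD; [apply: IH1 | apply: IH2].
Qed.

Lemma wdA u v w : inC u -> inC v -> inC w -> wd (wd u v) w = wd u (wd v w).
Proof.
move=> Cu; elim/inC_ind: Cu v w => [r {}u Hu|u1 u2 C1 C2 IH1 IH2] v w Cv Cw; last first.
  by rewrite !wdDl ?IH1 ?IH2 //; apply: inC_wd.
have Cu := inCr_inC Hu.
elim/inC_ind: Cv w Cw => [s {}v Hv|v1 v2 D1 D2 IH1 IH2] w Cw; last first.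
  by rewrite wdDr ?wdDl ?IH1 ?IH2 ?wdDr //; apply: inC_wd.
have Cv := inCr_inC Hv.
elim/inC_ind: Cw => [t {}w Hw|w1 w2 F1 F2 IH1 IH2]; first exact: wdA_hom Hu Hv Hw.
by rewrite !wdDr ?IH1 ?IH2 //; apply: inC_wd.
Qed.
End Bracket.
End Cochains.

Theorem mainTheorem1 (R : comNzRingType) (A : comAlgType R) (E : lmodType A)
  (g : E -> E -> A) (br wd : D E -> D E -> D E) :
  Q_in_ring R ->
  fg_projective E ->
  form_is_A_bilinear g -> form_is_symmetric g -> form_is_strongly_nondegenerate g -> form_is_full g ->
  bracket_spec g br -> wedge_spec g br wd ->
  (forall u v w, inC g u -> inC g v -> inC g w -> wd (wd u v) w = wd u (wd v w)) /\
  (forall r s u v, inCr g r u -> inCr g s v ->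
     wd u v = signD (odd (r * s)) (wd v u) /\ inCr g (r + s) (wd u v)) /\
  (forall r s u v, inCr g r u -> inCr g s v ->
     (if (2 <= r + s)%N then inCr g (r + s - 2) (br u v) else br u v = zeroD E) /\
     br u v = signD (~~ odd (r * s)) (br v u)) /\
  (forall r s t u v w, inCr g r u -> inCr g s v -> inCr g t w ->
     br u (br v w) = addD (br (br u v) w) (signD (odd (r * s)) (br v (br u w)))) /\
  (forall r s t u v w, inCr g r u -> inCr g s v -> inCr g t w ->
     br u (wd v w) = addD (wd (br u v) w) (signD (odd (r * s)) (wd v (br u w)))).
Proof.
(* [Q_in_ring R] and projectivity are what the paper needs to construct the
   bracket and the product; from their characterizing properties on, they
   play no further role. *)
move=> _ _ g_bil g_sym g_nondeg g_full brS wdS.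
split; first by move=> u v w Cu Cv Cw; apply: (wdA g_bil g_sym g_nondeg brS wdS Cu Cv Cw).
split=> [r s u v Hu Hv|]; first rewrite oddM.
  by split; [apply: (wdC g_bil g_sym g_nondeg brS wdS Hu Hv) | apply: (inCr_wd wdS Hu Hv)].
split=> [r s u v Hu Hv|]; first by split; [apply: (br_deg brS Hu Hv) | apply: (br_skew brS Hu Hv)].
split=> r s t u v w Hu Hv Hw; rewrite oddM.
  exact: (jacobi_hom g_bil g_sym g_nondeg g_full brS Hu Hv Hw).
exact: (leibniz_hom g_bil g_sym g_nondeg g_full brS wdS Hu Hv Hw).
Qed.
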